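(* Let $(\mathcal B,<)$ be a monoidal poset, $B\in\mathcal B$, and $i\ne k$ nodes with $r_iB=r_kB>B$. If $\beta$ is an element of $B$ of smallest height among the elements of $B$ moved by $r_i$ or $r_k$, then $\beta+\alpha_i+\alpha_k\in B$. Furthermore $i\not\sim k$.
   Context: Setting: $M$ is a spherical simply laced Coxeter diagram with nodes $1,\dots,n$ ($i\sim j$: distinct adjacent nodes; $i\not\sim j$ otherwise); $W$ its Weyl group with positive roots $\Phi^+$, fundamental roots $\alpha_i$, reflections $r_i$, inner product with $(\alpha_i,\alpha_i)=2$, $(\alpha_i,\alpha_j)=-1$ if $i\sim j$, $0$ otherwise; height $\mathrm{ht}(\sum a_k\alpha_k)=\sum a_k$. A root $\beta$ is moved by $r_i$ if $(\alpha_i,\beta)=\pm1$. For a set $B$ of mutually orthogonal positive roots, $wB=\Phi^+\cap\{\pm w\beta:\beta\in B\}$. A $W$-orbit $\mathcal B$ of such sets is admissible if for every $B\in\mathcal B$, all nodes $i\not\sim j$ and root $\gamma$ with $\gamma,\gamma-\alpha_i+\alpha_j\in B$, $r_iB=r_jB$. For $B,C\in\mathcal B$ write $B\prec C$ if $B\ne C$ and the minimal height of an element of $B\setminus C$ is strictly smaller than the minimal height of an element of $C\setminus B$. For admissible $\mathcal B$, the monoidal poset $(\mathcal B,<)$ is $\mathcal B$ with the partial order $<$ given by the transitive closure of $\{(B,r_jB): B\in\mathcal B,\ j\text{ a node},\ B\prec r_jB\}$; $>$ is the reverse relation. *)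

From HB Require Import structures.
From mathcomp Require Import all_boot all_order all_algebra.
From mathcomp Require Import finmap.
From Stdlib Require Import Relations.Relation_Operators.
Set Implicit Arguments. Unset Strict Implicit. Unset Printing Implicit Defensive.
Import GRing.Theory Num.Theory.
Local Open Scope ring_scope.
Local Open Scope fset_scope.

(* Vectors in the root lattice, written in the basis of fundamental roots:
   v = \sum_t v t * alpha_t.  Nodes 1..n are represented by 'I_n. *)
Definition vec (n : nat) := {ffun 'I_n -> int}.

(* The diagram M is given by its adjacency relation adj (i ~ j). *)
Definition simple_diagram n (adj : rel 'I_n) := symmetric adj /\ irreflexive adj.

Definition alpha n (i : 'I_n) : vec n := [ffun t => ((i == t) : nat)%:Z].

Definition cartan n (adj : rel 'I_n) (i j : 'I_n) : int :=
  if i == j then 2 else if adj i j then -1 else 0.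

Definition form n (adj : rel 'I_n) (u v : vec n) : int :=
  \sum_(i < n) \sum_(j < n) u i * v j * cartan adj i j.

Definition spherical n (adj : rel 'I_n) :=
  forall v : vec n, [exists t, v t != 0] -> 0 < form adj v v.

Definition refl n (adj : rel 'I_n) (i : 'I_n) (v : vec n) : vec n :=
  [ffun t => v t - form adj (alpha i) v * alpha i t].

Definition vneg n (v : vec n) : vec n := [ffun t => - v t].

Definition ht n (v : vec n) : int := \sum_(t < n) v t.

Inductive is_root n (adj : rel 'I_n) : vec n -> Prop :=
| root_simple i : is_root adj (alpha i)
| root_refl i b : is_root adj b -> is_root adj (refl adj i b).

(* nonnegative coordinates (a root is positive iff this holds) *)
Definition posv n (v : vec n) : bool := [forall t, 0 <= v t].

Definition is_pos_root n (adj : rel 'I_n) (v : vec n) := is_root adj v /\ posv v.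

Definition moved n (adj : rel 'I_n) (i : 'I_n) (b : vec n) : bool :=
  (form adj (alpha i) b == 1) || (form adj (alpha i) b == -1).

(* r_j B = Phi^+ \cap {+- r_j beta : beta in B}; applied to sets of roots,
   membership in Phi^+ amounts to nonnegativity of coordinates. *)
Definition act n (adj : rel 'I_n) (j : 'I_n) (B : {fset vec n}) : {fset vec n} :=
  [fset x in (refl adj j @` B) `|` ((fun b => vneg (refl adj j b)) @` B) | posv x].

Definition orth_pos_set n (adj : rel 'I_n) (B : {fset vec n}) :=
  (forall b, b \in B -> is_pos_root adj b) /\
  (forall b c, b \in B -> c \in B -> b != c -> form adj b c = 0).

(* the W-orbit of B0: W is generated by the r_j, so wB0 = r_j1 (... (r_jm B0)) *)
Definition in_Worbit n (adj : rel 'I_n) (B0 B : {fset vec n}) :=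
  exists js : seq 'I_n, B = foldr (act adj) B0 js.

Definition sub_add n (g : vec n) (i j : 'I_n) : vec n :=
  [ffun t => (g t - alpha i t + alpha j t)%R].

Definition add2 n (g : vec n) (i k : 'I_n) : vec n :=
  [ffun t => (g t + alpha i t + alpha k t)%R].

(* admissibility of the orbit of B0 ("i not~ j" includes i = j) *)
Definition admissible n (adj : rel 'I_n) (B0 : {fset vec n}) :=
  forall B, in_Worbit adj B0 B ->
  forall i j : 'I_n, ~~ adj i j ->
  forall g, g \in B -> sub_add g i j \in B -> act adj i B = act adj j B.

(* B \prec C : min height of B\C < min height of C\B (min over empty = +oo) *)
Definition prec n (B C : {fset vec n}) :=
  B != C /\ exists b, [/\ b \in B, b \notin C &
                          forall c, c \in C -> c \notin B -> ht b < ht c].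

Definition medge n (adj : rel 'I_n) (B0 : {fset vec n}) (B C : {fset vec n}) :=
  in_Worbit adj B0 B /\ exists j, C = act adj j B /\ prec B C.

Definition mlt n (adj : rel 'I_n) (B0 : {fset vec n}) : {fset vec n} -> {fset vec n} -> Prop :=
  clos_trans _ (medge adj B0).

(* Every set in the orbit of B0 consists of mutually orthogonal positive
   roots, on which r_j acts as the sign-corrected reflection fixing alpha_j and
   every root orthogonal to alpha_j; in particular every element of B \ r_i B is
   moved by r_i.  The relation prec is transitive and irreflexive, so it
   contains <, and since r_i (r_i B) = B, B < r_i B excludes r_i B prec B.
   If (alpha_j, beta) = 1 for some j with r_j B = r_i B, then beta - alpha_j
   lies in r_i B \ B strictly below every element of B \ r_i B, so r_i B prec B.
   Hence, say, (alpha_i, beta) = -1, and beta + alpha_i lies in r_i B = r_k B: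
   it is r_k gamma with gamma = beta + alpha_i + d alpha_k in B.  Orthogonality
   of beta and gamma gives d (alpha_k, beta) = -1, and d = (alpha_k, gamma)
   then forces (alpha_i, alpha_k) = 0; d = -1 would make (alpha_k, beta) = 1,
   which is excluded, so gamma = beta + alpha_i + alpha_k. *)

From Pilot Require Import Defs.
From mathcomp Require Import all_boot all_order all_algebra.
From mathcomp Require Import finmap.
From mathcomp Require Import zify ring.
From Stdlib Require Import Relations.Relation_Operators.
Import Order.TTheory GRing.Theory Num.Theory.
Local Open Scope ring_scope.

Section MonoidalOrder.
Variable n : nat.
Implicit Types S T U : {fset vec n}.

Lemma prec_trans S T U : prec S T -> prec T U -> prec S U.
Proof.
move=> [_ [b [bS bT hb]]] [_ [c [cT cU hc]]].
have [bc | cb] := leP (ht b) (ht c).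
- have bU : b \notin U.
    by apply/negP => bU; have := hc b bU bT; rewrite ltNge bc.
  split; first by apply: contraTneq bS => ->.
  exists b; split=> // x xU xS; have [xT | xT] := boolP (x \in T); first exact: hb.
  exact: le_lt_trans bc (hc x xU xT).
- have cS : c \in S.
    by apply/negPn/negP => cS; have := hb c cT cS; rewrite ltNge (ltW cb).
  split; first by apply: contraTneq cS => ->.
  exists c; split=> // x xU xS; have [xT | xT] := boolP (x \in T); last exact: hc.
  exact: lt_trans cb (hb x xT xS).
Qed.

Lemma prec_irrefl S : ~ prec S S.
Proof. by case; rewrite eqxx. Qed.

Lemma mlt_prec (adj : rel 'I_n) B0 S T : mlt adj B0 S T -> prec S T.
Proof.
elim=> [X Y [_ [_ [_ XY]]] // | X Y Z _ XY _ YZ].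
exact: prec_trans XY YZ.
Qed.

End MonoidalOrder.

Section RootLattice.
Variables (n : nat) (adj : rel 'I_n).
Hypothesis adjC : symmetric adj.

Local Notation a := (@alpha n).
Local Notation F := (Defs.form adj).
Implicit Types (u v w : vec n) (i j : 'I_n).

Lemma alphaE j t : a j t = if j == t then 1 else 0.
Proof. by rewrite ffunE; case: eqP. Qed.

Lemma cartanC i j : cartan adj i j = cartan adj j i.
Proof. by rewrite /cartan eq_sym adjC. Qed.

Lemma formC u v : F u v = F v u.
Proof.
rewrite /Defs.form exchange_big; apply: eq_bigr => i _; apply: eq_bigr => j _.
by rewrite cartanC; ring.
Qed.

Lemma formDr u v w : F u (v + w) = F u v + F u w.
Proof.
rewrite /Defs.form -big_split; apply: eq_bigr => i _; rewrite -big_split.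
by apply: eq_bigr => j _; rewrite ffunE mulrDr mulrDl.
Qed.

Lemma formZr u v (c : int) : F u (v *~ c) = c * F u v.
Proof.
rewrite /Defs.form mulr_sumr; apply: eq_bigr => i _; rewrite mulr_sumr.
by apply: eq_bigr => j _; rewrite ffunMzE mulrzz; ring.
Qed.

Lemma formNr u v : F u (- v) = - F u v.
Proof. by rewrite -mulrN1z formZr mulN1r. Qed.

Lemma formBr u v w : F u (v - w) = F u v - F u w.
Proof. by rewrite formDr formNr. Qed.

Lemma formDl u v w : F (u + v) w = F u w + F v w.
Proof. by rewrite !(formC _ w) formDr. Qed.

Lemma formZl u v (c : int) : F (u *~ c) v = c * F u v.
Proof. by rewrite !(formC _ v) formZr. Qed.

Lemma formNl u v : F (- u) v = - F u v.
Proof. by rewrite !(formC _ v) formNr. Qed.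

Lemma formBl u v w : F (u - v) w = F u w - F v w.
Proof. by rewrite !(formC _ w) formBr. Qed.

Lemma form0l v : F 0 v = 0.
Proof. by rewrite -(mulr0z (0 : vec n)) formZl mul0r. Qed.

Lemma form_alphal j v : F (a j) v = \sum_t v t * cartan adj j t.
Proof.
rewrite /Defs.form (bigD1 j) //= [X in _ + X]big1 => [|i ji]; last first.
  by rewrite big1 // => t _; rewrite alphaE eq_sym (negbTE ji) !mul0r.
by rewrite addr0; apply: eq_bigr => t _; rewrite alphaE eqxx mul1r.
Qed.

Lemma form_alpha i j : F (a i) (a j) = cartan adj i j.
Proof.
rewrite form_alphal (bigD1 j) //= big1 => [|t tj]; last first.
  by rewrite alphaE eq_sym (negbTE tj) mul0r.
by rewrite alphaE eqxx mul1r addr0.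
Qed.

Lemma form_alphaxx j : F (a j) (a j) = 2.
Proof. by rewrite form_alpha /cartan eqxx. Qed.

Lemma reflE j v : refl adj j v = v - a j *~ F (a j) v.
Proof. by apply/ffunP => t; rewrite !ffunE ffunMzE mulrzz ffunE mulrC. Qed.

Lemma refl_alpha j : refl adj j (a j) = - a j.
Proof. by rewrite reflE form_alphaxx -opprB -(mulr1z (a j)) -mulrzBr. Qed.

Lemma reflK j : involutive (refl adj j).
Proof.
move=> v; rewrite !reflE formBr formZr form_alphaxx.
have -> : F (a j) v - F (a j) v * 2 = - F (a j) v by ring.
by rewrite mulrNz opprK subrK.
Qed.

Lemma refl_isometry j u v : F (refl adj j u) (refl adj j v) = F u v.
Proof.
rewrite !reflE !formBr !formBl !formZr !formZl form_alphaxx (formC u (a j)).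
ring.
Qed.

Lemma vnegE v : vneg v = - v.
Proof. by apply/ffunP => t; rewrite !ffunE. Qed.

(* Coordinate rewriting through these lemmas rather than [ffunE] keeps the
   terms [v t] syntactically uniform, which [lia] needs. *)
Lemma vzeroE t : (0 : vec n) t = 0.
Proof. by rewrite ffunE. Qed.

Lemma vaddE u v t : (u + v) t = u t + v t.
Proof. by rewrite ffunE. Qed.

Lemma voppE v t : (- v) t = - v t.
Proof. by rewrite ffunE. Qed.

Lemma vsubE u v t : (u - v) t = u t - v t.
Proof. by rewrite vaddE voppE. Qed.

Lemma vmulzE v (c : int) t : (v *~ c) t = c * v t.
Proof. by rewrite ffunMzE mulrzz mulrC. Qed.

Lemma htD u v : ht (u + v) = ht u + ht v.
Proof. by rewrite /ht -big_split; apply: eq_bigr => t _; rewrite ffunE. Qed.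

Lemma htN v : ht (- v) = - ht v.
Proof. by rewrite /ht -sumrN; apply: eq_bigr => t _; rewrite ffunE. Qed.

Lemma ht_alpha j : ht (a j) = 1.
Proof.
rewrite /ht (bigD1 j) //= big1 => [|t tj]; last by rewrite alphaE eq_sym (negbTE tj).
by rewrite alphaE eqxx addr0.
Qed.

Lemma add2E v i k : add2 v i k = v + a i + a k.
Proof. by apply/ffunP => t; rewrite !ffunE. Qed.

Hypothesis adj_spherical : spherical adj.

Lemma posv_opp_alpha j : ~~ posv (- a j).
Proof. by apply/negP => /forallP /(_ j); rewrite voppE alphaE eqxx. Qed.

Lemma posv_opp_eq0 {v} : posv v -> posv (- v) -> v = 0.
Proof.
move=> /forallP pv /forallP pnv; apply/ffunP => t.
by apply/eqP; rewrite vzeroE eq_le -oppr_ge0 -voppE pnv pv.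
Qed.

Lemma form_alpha_bound {j v} :
  posv v -> F v v = 2 -> v != a j -> -1 <= F (a j) v <= 1.
Proof.
move=> /forallP pv vv vj.
have nz w : w != 0 -> 0 < F w w.
  move=> wnz; apply: adj_spherical; apply: contraR wnz => /existsPn w0.
  by apply/eqP/ffunP => t; rewrite ffunE; apply/eqP; rewrite -[_ == _]negbK w0.
have /nz pos_sub : v - a j != 0 by rewrite subr_eq0.
have /nz pos_add : v + a j != 0.
  by apply/eqP => /ffunP /(_ j); rewrite vaddE alphaE eqxx vzeroE; have := pv j; lia.
move: pos_sub pos_add.
rewrite !formBr !formBl !formDr !formDl form_alphaxx vv (formC v (a j)); lia.
Qed.

Lemma refl_posv {j v} : posv v -> F v v = 2 -> v != a j -> posv (refl adj j v).
Proof.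
move=> pv vv vj; have /andP [_ le1] := form_alpha_bound pv vv vj.
move/forallP: pv => pv; apply/forallP => t; rewrite reflE vsubE vmulzE alphaE.
have := pv t; case: (eqVneq j t) => [<- vj0|_]; last by lia.
suff : F (a j) v <= 0 \/ 1 <= v j by lia.
case: (ltrP 0 (v j)) => [|vj_le0]; [by right | left].
rewrite form_alphal; apply: sumr_le0 => s _.
have := pv s; rewrite /cartan; case: eqP => [<-|_]; first by lia.
by case: (adj j s); lia.
Qed.

Lemma refl_neq0 j {v} : F v v = 2 -> refl adj j v != 0.
Proof. by move=> vv; apply/eqP => r0; have := refl_isometry j v v; rewrite r0 form0l vv. Qed.

Definition pos_norm2 v := posv v && (F v v == 2).

Definition orth_norm2_set (B : {fset vec n}) :=
  {in B, forall b, pos_norm2 b} /\ {in B &, forall b c, b != c -> F b c = 0}.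

(* The action underlying [act] on a positive root: the positive one of
   [+- r_j v], i.e. [r_j v], except that [alpha_j] is fixed. *)
Definition pos_refl j v := if v == a j then v else refl adj j v.

Lemma pos_refl_pos_norm2 j v : pos_norm2 v -> pos_norm2 (pos_refl j v).
Proof.
move=> /andP [pv /eqP vv]; rewrite /pos_refl; case: eqVneq => [_|vj].
  by rewrite /pos_norm2 pv vv.
by rewrite /pos_norm2 refl_posv // refl_isometry vv.
Qed.

Lemma pos_reflK j v : pos_norm2 v -> pos_refl j (pos_refl j v) = v.
Proof.
move=> /andP [pv _]; rewrite /pos_refl.
case: (eqVneq v (a j)) => [-> | vj]; first by rewrite eqxx.
case: (eqVneq (refl adj j v) (a j)) => [rv | _]; last exact: reflK.
by move: pv; rewrite -(reflK j v) rv refl_alpha => /forallP /(_ j); rewrite voppE alphaE eqxx.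
Qed.

Lemma pos_refl_orth j u v : F u v = 0 -> F (pos_refl j u) (pos_refl j v) = 0.
Proof.
have sign w : pos_refl j w = refl adj j w \/ pos_refl j w = - refl adj j w.
  rewrite /pos_refl; case: eqVneq => [-> | _]; last by left.
  by right; rewrite refl_alpha opprK.
move=> uv0; rewrite -(refl_isometry j) in uv0.
by case: (sign u) => ->; case: (sign v) => ->; rewrite ?formNl ?formNr uv0 ?oppr0.
Qed.

Lemma pos_refl_unmoved j v : pos_norm2 v -> ~~ moved adj j v -> pos_refl j v = v.
Proof.
move=> /andP [pv /eqP vv] unmoved; rewrite /pos_refl; case: eqVneq => [// | vj].
have /andP [lo hi] := form_alpha_bound pv vv vj.
have c0 : F (a j) v = 0 by move: unmoved; rewrite /moved; lia.
by rewrite reflE c0 mulr0z subr0.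
Qed.

Lemma act_pos_refl j {B} :
  {in B, forall b, pos_norm2 b} -> act adj j B = (pos_refl j @` B)%fset.
Proof.
move=> PB; apply/fsetP => x; rewrite /act !inE.
apply/idP/imfsetP => [/andP [/orP [] /imfsetP [g gB ->] px] | [g gB ->]].
- exists g => //; rewrite /pos_refl; case: eqVneq => // gj.
  by move: px; rewrite gj refl_alpha (negbTE (posv_opp_alpha j)).
- exists g => //; rewrite /pos_refl; case: eqVneq => [-> | gj].
    by rewrite vnegE refl_alpha opprK.
  have /andP [pg /eqP gg] := PB g gB.
  have := posv_opp_eq0 (refl_posv pg gg gj); rewrite -vnegE => /(_ px) /eqP.
  by rewrite (negbTE (refl_neq0 j gg)).
- have /andP [pg /eqP gg] := PB g gB.
  rewrite /pos_refl; case: eqVneq => [ga | gj].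
    rewrite pg andbT; apply/orP; right; apply/imfsetP; exists g => //.
    by rewrite ga vnegE refl_alpha opprK.
  by rewrite refl_posv // andbT in_imfset.
Qed.

Lemma orth_norm2_set_act j {B} : orth_norm2_set B -> orth_norm2_set (act adj j B).
Proof.
move=> [PB OB]; rewrite act_pos_refl //; split.
  by move=> _ /imfsetP [g gB ->]; apply: pos_refl_pos_norm2; apply: PB.
move=> _ _ /imfsetP [g gB ->] /imfsetP [h hB ->] ne; apply: pos_refl_orth.
by apply: OB => //; apply: contraNneq ne => ->.
Qed.

Lemma actK j B : orth_norm2_set B -> act adj j (act adj j B) = B.
Proof.
move=> PB; have [PB' _] := orth_norm2_set_act j PB; case: PB => PB _.
rewrite (act_pos_refl _ PB') act_pos_refl // -imfset_comp -[RHS]imfset_id.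
by apply: eq_in_imfset => b bB /=; apply/pos_reflK/PB.
Qed.

Lemma root_norm2 b : is_root adj b -> F b b = 2.
Proof. by elim=> [j | j c _ IH]; rewrite ?form_alphaxx ?refl_isometry. Qed.

Lemma orth_norm2_set_orbit {B0 B} :
  orth_pos_set adj B0 -> in_Worbit adj B0 B -> orth_norm2_set B.
Proof.
move=> [B0root B0orth] [js ->]; elim: js => [|j js IH] /=; last exact: orth_norm2_set_act.
split=> // b bB; have [br bpos] := B0root b bB.
by rewrite /pos_norm2 bpos root_norm2.
Qed.

Lemma orth_shift_alpha {i k beta} d : i != k ->
  F beta beta = 2 -> F (a i) beta = -1 ->
  F (a k) (beta + a i + a k *~ d) = d -> F beta (beta + a i + a k *~ d) = 0 ->
  ~~ adj i k /\ (d = 1 \/ F (a k) beta = 1).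
Proof.
move=> ik bb ib; rewrite !formDr !formZr form_alpha form_alphaxx (formC beta) ib bb.
rewrite (formC beta) /cartan eq_sym (negbTE ik) adjC; set c := F (a k) beta.
move=> hd orth; have [] : d = 1 \/ d = -1.
  have : c <= -1 \/ c = 0 \/ 1 <= c by lia.
  by case=> [? | [? | ?]]; nia.
all: by move=> d1; rewrite d1 in hd orth *; case: (adj i k) hd; lia.
Qed.

Lemma mlt_act_not_prec B0 B j :
  orth_pos_set adj B0 -> in_Worbit adj B0 B ->
  mlt adj B0 B (act adj j B) -> ~ prec (act adj j B) B.
Proof.
move=> B0P BW lt_B_jB prec_jB_B.
have jBW : in_Worbit adj B0 (act adj j B) by case: BW => js ->; exists (j :: js).
have edge : medge adj B0 (act adj j B) B.
  by split=> //; exists j; rewrite actK //; exact: orth_norm2_set_orbit B0P BW.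
apply: (@prec_irrefl _ B); apply: mlt_prec.
exact: t_trans lt_B_jB (t_step _ _ _ _ edge).
Qed.

Section LowestMoved.
Variables (B : {fset vec n}) (i : 'I_n).
Hypotheses (PB : orth_norm2_set B) (not_prec : ~ prec (act adj i B) B).

Lemma act_unmoved g : g \in B -> ~~ moved adj i g -> g \in act adj i B.
Proof.
move=> gB unmoved; rewrite act_pos_refl; last by case: PB.
by apply/imfsetP; exists g; rewrite // pos_refl_unmoved //; case: PB => + _; apply.
Qed.

Lemma lowest_moved_not_lowered j beta :
  act adj i B = act adj j B -> beta \in B ->
  (forall g, g \in B -> moved adj i g -> ht beta <= ht g) ->
  F (a j) beta != 1.
Proof.
move=> ij bB low; apply/eqP => jb.
have [PBn PBo] := PB; have /andP [_ /eqP bb] := PBn beta bB.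
have bj : beta != a j by apply: contra_eq_neq jb => ->; rewrite form_alphaxx.
have lowered : beta - a j \in act adj i B.
  rewrite ij act_pos_refl //; apply/imfsetP; exists beta => //.
  by rewrite /pos_refl (negbTE bj) reflE jb mulr1z.
have notB : beta - a j \notin B.
  apply/negP => lB; have bl : beta != beta - a j.
    by apply/eqP => /(congr1 (@ht n)); rewrite htD htN ht_alpha; lia.
  by move: (PBo _ _ bB lB bl); rewrite formBr (formC beta) jb bb.
apply: not_prec; split; first by apply: contraTneq lowered => ->.
exists (beta - a j); split=> // c cB cC.
have mc : moved adj i c by apply: contraNT cC; apply: act_unmoved.
by have := low c cB mc; rewrite htD htN ht_alpha; lia.
Qed.

Lemma lowest_moved_raised k beta :
  i != k -> act adj i B = act adj k B -> beta \in B -> moved adj i beta ->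
  (forall g, g \in B -> moved adj i g || moved adj k g -> ht beta <= ht g) ->
  add2 beta i k \in B /\ ~~ adj i k.
Proof.
move=> ik ik_act bB mi low; have [PBn PBo] := PB.
have /andP [/forallP bpos /eqP bb] := PBn beta bB.
have not_lowered j : act adj i B = act adj j B -> F (a j) beta != 1.
  move=> ij; apply: lowest_moved_not_lowered ij bB _ => g gB mg.
  by apply: low; rewrite ?mg.
have ib : F (a i) beta = -1 by case/orP: mi (not_lowered i erefl) => /eqP ->.
have bi : beta != a i by apply: contra_eq_neq ib => ->; rewrite form_alphaxx.
have : beta + a i \in act adj k B.
  rewrite -ik_act act_pos_refl //; apply/imfsetP; exists beta => //.
  by rewrite /pos_refl (negbTE bi) reflE ib mulrN1z opprK.
rewrite act_pos_refl // => /imfsetP [g gB]; rewrite /pos_refl.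
case: eqVneq => [-> | gk] raised.
  move: raised => /(congr1 (fun v => v i)).
  by rewrite vaddE !alphaE eqxx eq_sym (negbTE ik); have := bpos i; lia.
set d := F (a k) g; have gE : g = beta + a i + a k *~ d by rewrite raised reflE subrK.
have bg : beta != g.
  apply/eqP => bg; move: gE => /(congr1 (fun v => v i)).
  by rewrite -bg !vaddE vmulzE !alphaE eqxx eq_sym (negbTE ik); lia.
have [||nadj [d1 | kb]] := orth_shift_alpha d ik bb ib; rewrite -?gE //.
- exact: PBo.
- by rewrite add2E -[a k]mulr1z -d1 -gE.
- by move: (not_lowered k ik_act); rewrite kb.
Qed.

End LowestMoved.
End RootLattice.

Local Open Scope fset_scope.

Theorem lemma3p3 (n : nat) (adj : rel 'I_n)
  (hM : simple_diagram adj) (hsph : spherical adj)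
  (B0 : {fset vec n}) (hB0 : orth_pos_set adj B0) (hadm : admissible adj B0)
  (B : {fset vec n}) (hB : in_Worbit adj B0 B)
  (i k : 'I_n) (hik : i != k)
  (heq : act adj i B = act adj k B)
  (hlt : mlt adj B0 B (act adj i B))
  (beta : vec n) (hbeta : beta \in B)
  (hmov : moved adj i beta || moved adj k beta)
  (hmin : forall g, g \in B -> moved adj i g || moved adj k g -> ht beta <= ht g) :
  add2 beta i k \in B /\ ~~ adj i k.
Proof.
have [adjC _] := hM.
have PB := orth_norm2_set_orbit _ _ adjC hsph hB0 hB.
have not_prec := mlt_act_not_prec _ _ adjC hsph _ _ _ hB0 hB hlt.
have raised := lowest_moved_raised _ _ adjC hsph _ _ PB.
case/orP: hmov => [mi | mk]; first exact: raised _ not_prec _ _ hik heq hbeta mi hmin.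
rewrite heq in not_prec.
have [||] := raised _ not_prec _ _ _ (esym heq) hbeta mk.
- by rewrite eq_sym.
- by move=> g gB; rewrite orbC; apply: hmin.
- by rewrite !add2E addrAC adjC.
Qed.
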